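(* Let $\mathcal{H}$ be an indexed preorder with existential quantification, and let $\mathcal{A}\subseteq\mathcal{H}$ be an indexed sub-preorder such that (1) every predicate in $\mathcal{A}$ is $\exists$-prime in $\mathcal{H}$, and (2) for every set $I$ and predicate $\varphi\in\mathcal{H}(I)$ there exist a function $u:J\to I$ and $\pi\in\mathcal{A}(J)$ with $\varphi\cong\exists_u\pi$. Then the inclusion $\mathcal{A}\hookrightarrow\mathcal{H}$ is an $\exists$-completion, and moreover $\mathcal{A}\hookrightarrow\mathsf{prim}(\mathcal{H})$ is an equivalence, i.e. every $\exists$-prime predicate of $\mathcal{H}$ is isomorphic to one in $\mathcal{A}$. In particular, if $\mathcal{H}$ has enough $\exists$-prime predicates, then $\mathsf{prim}(\mathcal{H})\hookrightarrow\mathcal{H}$ is an $\exists$-completion.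
   Context: An indexed preorder is a pseudofunctor $\mathcal{H}:\mathsf{Set}^{op}\to\mathsf{Ord}$; elements of $\mathcal{H}(I)$ are predicates on $I$, and $u^*=\mathcal{H}(u)$ for $u:J\to I$. $\mathsf{IOrd}$ denotes the locally ordered category of indexed preorders and pseudonatural transformations (indexed monotone maps), ordered componentwise. $\mathcal{H}$ has existential quantification if every $u^*:\mathcal{H}(I)\to\mathcal{H}(J)$ has a left adjoint $\exists_u$ and the Beck–Chevalley condition holds: for every pullback square in $\mathsf{Set}$ with $\bar u:L\to K$, $\bar v:L\to J$, $u:J\to I$, $v:K\to I$, one has $u^*\circ\exists_v\cong\exists_{\bar v}\circ\bar u^*$. An indexed monotone map $f:\mathcal{H}\to\mathcal{K}$ commutes with existential quantification if $f_I\circ\exists_u\cong\exists_u\circ f_J$ for all $u:J\to I$; $\exists\text{-}\mathsf{IOrd}$ is the sub-2-category of indexed preorders with existential quantification and such maps. An indexed monotone map $f:\mathcal{A}\to\mathcal{H}$ into an indexed preorder with existential quantification is an $\exists$-completion if for every $\mathcal{K}$ with existential quantification, precomposition $\exists\text{-}\mathsf{IOrd}(\mathcal{H},\mathcal{K})\to\mathsf{IOrd}(\mathcal{A},\mathcal{K})$ is an equivalence of preorders. For $\mathcal{H}$ with existential quantification, $\pi\in\mathcal{H}(I)$ is $\exists$-prime if for all functions $I\xleftarrow{u}J\xleftarrow{v}K$ and $\varphi\in\mathcal{H}(K)$ with $u^*\pi\le\exists_v\varphi$ there is $s:J\to K$ with $v\circ s=\mathrm{id}_J$ and $u^*\pi\le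 s^*\varphi$. $\mathsf{prim}(\mathcal{H})$ is the indexed sub-preorder of $\exists$-prime predicates, and $\mathcal{H}$ has enough $\exists$-prime predicates if every $\varphi\in\mathcal{H}(I)$ is isomorphic to $\exists_u\pi$ for some $u:J\to I$ and $\exists$-prime $\pi\in\mathcal{H}(J)$. *)

Set Implicit Arguments.

(** For a preorder-valued pseudofunctor all coherence conditions are automatic,
    so the data is: a preorder H(I) for each I, monotone reindexing u^*, and
    isomorphisms id^* ≅ id and (u∘v)^* ≅ v^* u^*. *)
Record IPre := {
  pr :> Type -> Type;
  le : forall I : Type, pr I -> pr I -> Prop;
  le_refl : forall I (x : pr I), le x x;
  le_trans : forall I (x y z : pr I), le x y -> le y z -> le x z;
  rx : forall (I J : Type), (J -> I) -> pr I -> pr J;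
  rx_mono : forall I J (u : J -> I) (x y : pr I), le x y -> le (rx u x) (rx u y);
  rx_id1 : forall I (x : pr I), le (rx (fun i : I => i) x) x;
  rx_id2 : forall I (x : pr I), le x (rx (fun i : I => i) x);
  rx_comp1 : forall I J K (u : J -> I) (v : K -> J) (x : pr I),
      le (rx (fun k => u (v k)) x) (rx v (rx u x));
  rx_comp2 : forall I J K (u : J -> I) (v : K -> J) (x : pr I),
      le (rx v (rx u x)) (rx (fun k => u (v k)) x)
}.

Arguments le {_ _} _ _.
Arguments rx {_ _ _} _ _.
Arguments le_refl {_ _} _.
Arguments le_trans {_ _ _ _ _} _ _.
Arguments rx_mono {_ _ _} _ {_ _} _.
Arguments rx_id1 {_ _} _.
Arguments rx_id2 {_ _} _.
Arguments rx_comp1 {_ _ _ _} _ _ _.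
Arguments rx_comp2 {_ _ _ _} _ _ _.

Definition iso (H : IPre) (I : Type) (x y : H I) : Prop := le x y /\ le y x.
Arguments iso {_ _} _ _.

Definition is_pullback (I J K L : Type) (u : J -> I) (v : K -> I)
    (ub : L -> K) (vb : L -> J) : Prop :=
  (forall l, u (vb l) = v (ub l)) /\
  (forall (X : Type) (a : X -> K) (b : X -> J),
      (forall x, v (a x) = u (b x)) ->
      exists h : X -> L, (forall x, ub (h x) = a x) /\ (forall x, vb (h x) = b x) /\
        forall h' : X -> L, (forall x, ub (h' x) = a x) -> (forall x, vb (h' x) = b x) ->
          forall x, h' x = h x).

Record HasExists (H : IPre) := {
  ex : forall (I J : Type), (J -> I) -> H J -> H I;
  ex_adj : forall I J (u : J -> I) (x : H J) (y : H I),
      le (ex u x) y <-> le x (rx u y);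
  ex_bc : forall I J K L (u : J -> I) (v : K -> I) (ub : L -> K) (vb : L -> J),
      is_pullback u v ub vb ->
      forall x : H K, iso (rx u (ex v x)) (ex vb (rx ub x))
}.

Arguments ex {_} _ {_ _} _ _.

Record IMap (H K : IPre) := {
  imap :> forall I : Type, H I -> K I;
  imap_mono : forall I (x y : H I), le x y -> le (imap I x) (imap I y);
  imap_nat : forall I J (u : J -> I) (x : H I), iso (imap J (rx u x)) (rx u (imap I x))
}.

Arguments imap {_ _} _ _ _.

Definition imap_le (H K : IPre) (f g : IMap H K) : Prop :=
  forall I (x : H I), le (f I x) (g I x).

Definition commutes_exists (H K : IPre) (hH : HasExists H) (hK : HasExists K)
    (f : IMap H K) : Prop :=
  forall I J (u : J -> I) (x : H J), iso (f I (ex hH u x)) (ex hK u (f J x)).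

Program Definition imap_comp (A H K : IPre) (g : IMap H K) (f : IMap A H) : IMap A K :=
  {| imap := fun I x => g I (f I x) |}.
Next Obligation. intros; apply imap_mono, imap_mono; assumption. Qed.
Next Obligation.
  intros.   destruct (imap_nat f u x) as [h1 h2]. destruct (imap_nat g u (f I x)) as [k1 k2].
  split.
  - eapply le_trans; [apply imap_mono; exact h1|exact k1].
  - eapply le_trans; [exact k2|apply imap_mono; exact h2].
Qed.

Definition preorder_equiv (X Y : Type) (leX : X -> X -> Prop) (leY : Y -> Y -> Prop)
    (F : X -> Y) : Prop :=
  (forall x x', leX x x' -> leY (F x) (F x')) /\
  exists G : Y -> X,
    (forall y y', leY y y' -> leX (G y) (G y')) /\
    (forall x, leX (G (F x)) x /\ leX x (G (F x))) /\
    (forall y, leY (F (G y)) y /\ leY y (F (G y))).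

Definition exists_IMap (H K : IPre) (hH : HasExists H) (hK : HasExists K) : Type :=
  { g : IMap H K | commutes_exists hH hK g }.

Definition is_exists_completion (A H : IPre) (hH : HasExists H) (f : IMap A H) : Prop :=
  forall (K : IPre) (hK : HasExists K),
    preorder_equiv
      (fun g g' : exists_IMap hH hK => imap_le (proj1_sig g) (proj1_sig g'))
      (@imap_le A K)
      (fun g : exists_IMap hH hK => imap_comp (proj1_sig g) f).

Definition reindex_closed (H : IPre) (P : forall I : Type, H I -> Prop) : Prop :=
  forall I J (u : J -> I) (x : H I), P I x -> P J (rx u x).
Arguments reindex_closed {_} _.

Definition sub_IPre (H : IPre) (P : forall I : Type, H I -> Prop)
    (hP : reindex_closed P) : IPre :=
  {| pr := fun I => { x : H I | P I x };
     le := fun I x y => le (proj1_sig x) (proj1_sig y);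
     le_refl := fun I x => le_refl (proj1_sig x);
     le_trans := fun I x y z h1 h2 => le_trans h1 h2;
     rx := fun I J u x => exist _ (rx u (proj1_sig x)) (hP _ _ u _ (proj2_sig x));
     rx_mono := fun I J u x y h => rx_mono u h;
     rx_id1 := fun I x => rx_id1 (proj1_sig x);
     rx_id2 := fun I x => rx_id2 (proj1_sig x);
     rx_comp1 := fun I J K u v x => rx_comp1 u v (proj1_sig x);
     rx_comp2 := fun I J K u v x => rx_comp2 u v (proj1_sig x) |}.

Program Definition sub_incl (H : IPre) (P : forall I : Type, H I -> Prop)
    (hP : reindex_closed P) : IMap (sub_IPre hP) H :=
  {| imap := fun I x => proj1_sig x |}.
Next Obligation. intros; assumption. Qed.
Next Obligation. intros; split; apply le_refl. Qed.

Definition ex_prime (H : IPre) (hH : HasExists H) (I : Type) (p : H I) : Prop :=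
  forall (J K : Type) (u : J -> I) (v : K -> J) (phi : H K),
    le (rx u p) (ex hH v phi) ->
    exists s : J -> K, (forall j, v (s j) = j) /\ le (rx u p) (rx s phi).

Arguments ex_prime {H} hH {I} p.

Lemma ex_prime_closed (H : IPre) (hH : HasExists H) : reindex_closed (fun I => @ex_prime H hH I).
Proof.
  intros I J w p Hp K L u v phi Hle.
  destruct (Hp K L (fun k => w (u k)) v phi) as [s [Hs Hle']].
  - eapply le_trans; [apply rx_comp1|exact Hle].
  - exists s; split; [exact Hs|].
    eapply le_trans; [apply rx_comp2|exact Hle'].
Qed.

Definition prim (H : IPre) (hH : HasExists H) : IPre := @sub_IPre H (fun I => @ex_prime H hH I) (@ex_prime_closed H hH).
Definition prim_incl (H : IPre) (hH : HasExists H) : IMap (prim hH) H :=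
  @sub_incl H (fun I => @ex_prime H hH I) (@ex_prime_closed H hH).

Definition enough_primes (H : IPre) (hH : HasExists H) : Prop :=
  forall I (phi : H I), exists (J : Type) (u : J -> I) (p : H J),
    ex_prime hH p /\ iso phi (ex hH u p).

(** If [a] is ∃-prime, then [∃_u a <= ∃_w b] holds exactly when [a <= t^* b]
    for some [t] with [w ∘ t = u]: Beck–Chevalley rewrites [u^* ∃_w b] as an
    existential along a pullback, and primality provides a section of it.
    Hence when every predicate of [A] is ∃-prime, inequalities between
    presentations [∃_u a] are witnessed inside [A], so any indexed monotone
    [g] on [A] extends to [H] by [∃_u a ↦ ∃_u (g a)], and this is the unique
    extension commuting with ∃.  An ∃-prime [p ≅ ∃_u a] is split by such a
    section [s], whence [p ≅ s^* a] lies in [A] up to isomorphism. *)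

From Stdlib Require Import ClassicalEpsilon FunctionalExtensionality ProofIrrelevance.
Set Implicit Arguments.

Section Iso.
Variables (H : IPre) (I : Type).

Lemma iso_sym (x y : H I) : iso x y -> iso y x.
Proof. intros [h1 h2]; split; assumption. Qed.

Lemma iso_trans (x y z : H I) : iso x y -> iso y z -> iso x z.
Proof. intros [h1 h2] [k1 k2]; split; eapply le_trans; eassumption. Qed.

End Iso.

Lemma rx_iso (H : IPre) I J (u : J -> I) (x y : H I) : iso x y -> iso (rx u x) (rx u y).
Proof. intros [h1 h2]; split; apply rx_mono; assumption. Qed.

Lemma imap_iso (H K : IPre) (f : IMap H K) I (x y : H I) :
  iso x y -> iso (f I x) (f I y).
Proof. intros [h1 h2]; split; apply imap_mono; assumption. Qed.

Lemma rx_ext {H : IPre} I J (f g : J -> I) (x : H I) :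
  (forall j, f j = g j) -> rx f x = rx g x.
Proof. intro e; now rewrite (functional_extensionality f g e). Qed.

Section Exists.
Variables (H : IPre) (hH : HasExists H).

Lemma ex_unit I J (u : J -> I) (x : H J) : le x (rx u (ex hH u x)).
Proof. apply (ex_adj hH), le_refl. Qed.

Lemma ex_mono I J (u : J -> I) (x y : H J) : le x y -> le (ex hH u x) (ex hH u y).
Proof. intro h; apply (ex_adj hH); eapply le_trans; [exact h | apply ex_unit]. Qed.

Lemma ex_iso I J (u : J -> I) (x y : H J) : iso x y -> iso (ex hH u x) (ex hH u y).
Proof. intros [h1 h2]; split; apply ex_mono; assumption. Qed.

Lemma ex_id I (x : H I) : iso (ex hH (fun i => i) x) x.
Proof.
  split.
  - apply (ex_adj hH), rx_id2.
  - eapply le_trans; [apply (ex_unit (fun i : I => i)) | apply rx_id1].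
Qed.

Lemma ex_comp I J K (u : J -> I) (v : K -> J) (x : H K) :
  iso (ex hH (fun k => u (v k)) x) (ex hH u (ex hH v x)).
Proof.
  split.
  - apply (ex_adj hH).
    eapply le_trans; [apply (ex_unit v) |].
    eapply le_trans; [apply rx_mono, (ex_unit u) | apply rx_comp2].
  - do 2 apply (ex_adj hH).
    eapply le_trans; [apply (ex_unit (fun k => u (v k))) | apply rx_comp1].
Qed.

Lemma rx_le_rx_ex I J K (w : K -> I) (t : J -> K) (u : J -> I) (y : H K) :
  (forall j, w (t j) = u j) -> le (rx t y) (rx u (ex hH w y)).
Proof.
  intro e.
  eapply le_trans; [apply rx_mono, (ex_unit w) |].
  rewrite <- (rx_ext _ _ (ex hH w y) e); apply rx_comp2.
Qed.

End Exists.

Section Pullback.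
Variables (I J K : Type) (u : J -> I) (w : K -> I).

Definition pb : Type := { jk : J * K | u (fst jk) = w (snd jk) }.
Definition pb_fst (l : pb) : J := fst (proj1_sig l).
Definition pb_snd (l : pb) : K := snd (proj1_sig l).

Lemma pb_is_pullback : is_pullback u w pb_snd pb_fst.
Proof.
  split; [intros [jk e]; exact e |].
  intros X a b e.
  exists (fun x => exist _ (b x, a x) (eq_sym (e x))).
  split; [reflexivity | split; [reflexivity |]].
  intros h ea eb x.
  destruct (h x) as [[j k] ejk] eqn:E.
  specialize (ea x); specialize (eb x).
  unfold pb_snd, pb_fst in ea, eb; rewrite E in ea, eb; simpl in ea, eb; subst.
  f_equal; apply proof_irrelevance.
Qed.

Lemma rx_ex_pb (H : IPre) (hH : HasExists H) (y : H K) :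
  iso (rx u (ex hH w y)) (ex hH pb_fst (rx pb_snd y)).
Proof. exact (ex_bc hH pb_is_pullback y). Qed.

End Pullback.

Arguments pb_fst {I J K} u w l.
Arguments pb_snd {I J K} u w l.

Section Primes.
Variables (H : IPre) (hH : HasExists H).

Lemma ex_prime_factor I J K (u : J -> I) (w : K -> I) (a : H J) (y : H K) :
  ex_prime hH a -> le (ex hH u a) (ex hH w y) ->
  exists t : J -> K, (forall j, w (t j) = u j) /\ le a (rx t y).
Proof.
  intros prime_a h.
  assert (h_pb : le (rx (fun j : J => j) a) (ex hH (pb_fst u w) (rx (pb_snd u w) y))).
  { eapply le_trans; [apply rx_id1 |].
    eapply le_trans; [apply (ex_adj hH), h | apply rx_ex_pb]. }
  destruct (prime_a _ _ _ _ _ h_pb) as [s [s_section le_s]].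
  exists (fun j => pb_snd u w (s j)); split.
  - intro j; unfold pb_snd; rewrite <- (proj2_sig (s j)); f_equal; apply s_section.
  - eapply le_trans; [apply rx_id2 |].
    eapply le_trans; [exact le_s | apply rx_comp2].
Qed.

Lemma ex_prime_iso_rx I J (u : J -> I) (p : H I) (a : H J) :
  ex_prime hH p -> iso p (ex hH u a) -> exists s : I -> J, iso p (rx s a).
Proof.
  intros prime_p [h1 h2].
  destruct (@ex_prime_factor I I J (fun i => i) u p a prime_p) as [s [s_section le_s]].
  { eapply le_trans; [apply (ex_id hH _ p) | exact h1]. }
  exists s; split; [exact le_s |].
  eapply le_trans; [apply (rx_le_rx_ex hH u s (fun i => i) a s_section) |].
  eapply le_trans; [apply rx_id1 | exact h2].
Qed.

End Primes.

Arguments ex_prime_factor {H hH I J K u w a y} _ _.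
Arguments ex_prime_iso_rx {H hH I J u p a} _ _.

Section Completion.
Variables (H : IPre) (hH : HasExists H) (P : forall I : Type, H I -> Prop)
  (hP : reindex_closed P).
Hypothesis P_dense : forall I (phi : H I), exists (J : Type) (u : J -> I) (p : H J),
  P J p /\ iso phi (ex hH u p).

Local Notation A := (sub_IPre hP).

Lemma ex_prime_iso_sub I (p : H I) : ex_prime hH p -> exists a : H I, P I a /\ iso a p.
Proof.
  intro prime_p.
  destruct (P_dense _ p) as [J [u [a [Pa p_iso]]]].
  destruct (ex_prime_iso_rx prime_p p_iso) as [s s_iso].
  exists (rx s a); split; [exact (hP s Pa) | exact (iso_sym s_iso)].
Qed.

Hypothesis P_prime : forall I (p : H I), P I p -> ex_prime hH p.

Lemma ex_le_transfer (K : IPre) (hK : HasExists K) (g : IMap A K)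
    I J J' (u : J -> I) (w : J' -> I) (a : A J) (b : A J') :
  le (ex hH u (proj1_sig a)) (ex hH w (proj1_sig b)) ->
  le (ex hK u (g J a)) (ex hK w (g J' b)).
Proof.
  intro h.
  destruct (ex_prime_factor (P_prime (proj2_sig a)) h) as [t [wt_u le_t]].
  apply (ex_adj hK).
  eapply le_trans; [apply imap_mono with (y := rx t b), le_t |].
  eapply le_trans; [apply (imap_nat g t b) | exact (rx_le_rx_ex hK w t u _ wt_u)].
Qed.

Record presentation (I : Type) := Presentation {
  pres_dom : Type;
  pres_map : pres_dom -> I;
  pres_gen : A pres_dom
}.

Definition presents I (x : H I) (r : presentation I) : Prop :=
  iso x (ex hH (pres_map r) (proj1_sig (pres_gen r))).

Lemma presentation_exists {I} (x : H I) : exists r : presentation I, presents x r.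
Proof.
  destruct (P_dense _ x) as [J [u [a [Pa x_iso]]]].
  now exists (Presentation u (exist _ a Pa : A J)).
Qed.

Definition presentation_of {I} (x : H I) : presentation I :=
  proj1_sig (constructive_indefinite_description _ (presentation_exists x)).

Lemma presentation_ofP {I} (x : H I) : presents x (presentation_of x).
Proof. exact (proj2_sig (constructive_indefinite_description _ (presentation_exists x))). Qed.

Variables (K : IPre) (hK : HasExists K).

Definition extend (g : IMap A K) {I} (x : H I) : K I :=
  let r := presentation_of x in ex hK (pres_map r) (g _ (pres_gen r)).

Lemma extend_iso (g : IMap A K) I (x : H I) J (w : J -> I) (b : A J) :
  iso x (ex hH w (proj1_sig b)) -> iso (extend g x) (ex hK w (g J b)).
Proof.
  intros [h1 h2]; destruct (presentation_ofP x) as [r1 r2].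
  split; apply ex_le_transfer; eapply le_trans; eassumption.
Qed.

Lemma extend_mono (g : IMap A K) I (x y : H I) : le x y -> le (extend g x) (extend g y).
Proof.
  intro h; destruct (presentation_ofP x) as [_ rx2]; destruct (presentation_ofP y) as [ry1 _].
  apply ex_le_transfer.
  eapply le_trans; [exact rx2 | eapply le_trans; [exact h | exact ry1]].
Qed.

Lemma extend_nat (g : IMap A K) I J (v : J -> I) (x : H I) :
  iso (extend g (rx v x)) (rx v (extend g x)).
Proof.
  pose proof (presentation_ofP x) as x_iso.
  set (r := presentation_of x) in x_iso |- *.
  apply iso_trans with
    (ex hK (pb_fst v (pres_map r)) (g _ (rx (pb_snd v (pres_map r)) (pres_gen r)))).
  - apply extend_iso.
    exact (iso_trans (rx_iso v x_iso) (rx_ex_pb _ _ hH _)).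
  - apply iso_trans with
      (ex hK (pb_fst v (pres_map r)) (rx (pb_snd v (pres_map r)) (g _ (pres_gen r)))).
    + apply ex_iso, imap_nat.
    + apply iso_sym, rx_ex_pb.
Qed.

Definition extend_map (g : IMap A K) : IMap H K :=
  {| imap := fun I x => extend g x; imap_mono := extend_mono g; imap_nat := extend_nat g |}.

Lemma extend_commutes_exists (g : IMap A K) : commutes_exists hH hK (extend_map g).
Proof.
  intros I J v x; simpl.
  pose proof (presentation_ofP x) as x_iso.
  set (r := presentation_of x) in x_iso |- *.
  apply iso_trans with (ex hK (fun k => v (pres_map r k)) (g _ (pres_gen r))).
  - apply extend_iso.
    exact (iso_trans (ex_iso hH v x_iso) (iso_sym (ex_comp hH _ _ _))).
  - apply ex_comp.
Qed.

Lemma extend_sub_incl (g : IMap A K) I (a : A I) : iso (extend g (proj1_sig a)) (g I a).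
Proof.
  apply iso_trans with (ex hK (fun i => i) (g I a)).
  - apply extend_iso, iso_sym, ex_id.
  - apply ex_id.
Qed.

Lemma extend_comp_sub_incl (f : IMap H K) :
  commutes_exists hH hK f ->
  forall I (x : H I), iso (extend (imap_comp f (sub_incl hP)) x) (f I x).
Proof.
  intros f_ex I x.
  pose proof (presentation_ofP x) as x_iso.
  set (r := presentation_of x) in x_iso |- *.
  apply iso_sym, iso_trans with (f I (ex hH (pres_map r) (proj1_sig (pres_gen r)))).
  - exact (imap_iso f x_iso).
  - apply f_ex.
Qed.

End Completion.

Theorem sub_incl_exists_completion (H : IPre) (hH : HasExists H)
    (P : forall I : Type, H I -> Prop) (hP : reindex_closed P) :
  (forall I (phi : H I), exists (J : Type) (u : J -> I) (p : H J),
      P J p /\ iso phi (ex hH u p)) ->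
  (forall I (p : H I), P I p -> ex_prime hH p) ->
  is_exists_completion hH (sub_incl hP).
Proof.
  intros P_dense P_prime K hK; split.
  - intros g g' h I x; apply h.
  - exists (fun g => exist _ (extend_map P_dense P_prime hK g)
                            (extend_commutes_exists P_dense P_prime hK g)).
    split; [| split].
    + intros g g' h I x; apply ex_mono, h.
    + intros [f f_ex]; split; intros I x;
        apply (extend_comp_sub_incl hP P_dense f_ex).
    + intro g; split; intros I a; apply (extend_sub_incl P_dense P_prime).
Qed.

Theorem proposition4p3 :
  (forall (H : IPre) (hH : HasExists H)
          (P : forall I : Type, H I -> Prop) (hP : reindex_closed P),
      (forall I (p : H I), P I p -> ex_prime hH p) ->
      (forall I (phi : H I), exists (J : Type) (u : J -> I) (p : H J),
          P J p /\ iso phi (ex hH u p)) ->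
      is_exists_completion hH (sub_incl hP) /\
      (forall I (p : H I), ex_prime hH p -> exists a : H I, P I a /\ iso a p)) /\
  (forall (H : IPre) (hH : HasExists H),
      enough_primes hH -> is_exists_completion hH (prim_incl hH)).
Proof.
  split.
  - intros H hH P hP P_prime P_dense; split.
    + exact (sub_incl_exists_completion hP P_dense P_prime).
    + exact (ex_prime_iso_sub hP P_dense).
  - intros H hH enough.
    exact (sub_incl_exists_completion (@ex_prime_closed H hH) enough (fun I p h => h)).
Qed.
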